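(* For every $n\ge1$, the reflexive complete graph $K^n$ is fibrant in the Matsushita model structure on $\mathbf{Gr}$ (and hence, regarded as a loop graph with all vertices looped, in the Matsushita model structure on $\mathbf{Gr}_\ell$); that is, $\mathrm{Ex}^2\mathrm{Sing}\,\mathrm{C}\ell(K^n)$ is a Kan complex.
   Context: A simplicial complex consists of a vertex set and a collection of nonempty finite subsets (simplices) containing all singletons and closed under nonempty subsets; maps are vertex functions preserving simplices; $\mathbf{Cpx}$ is the category. $\mathbf{Gr}$ (reflexive graphs) is the full subcategory of complexes whose simplices have at most two elements; $K^n$ is the reflexive graph on $n$ vertices with all edges. $\mathrm{C}\ell:\mathbf{Gr}\to\mathbf{Cpx}$ is the clique complex functor. $\mathbf{\Delta}^n$ is the complex on $\{0,\dots,n\}$ with all nonempty subsets simplices, $\mathrm{Sing}(K)_n=\mathbf{Cpx}(\mathbf{\Delta}^n,K)$, $\mathrm{Ex}$ is the right adjoint of barycentric subdivision. In the Matsushita model structure on $\mathbf{Gr}$ a map $f$ is a fibration iff $\mathrm{Ex}^2\mathrm{Sing}\,\mathrm{C}\ell(f)$ is a Kan fibration. Loop graphs are sets with a symmetric relation; in the Matsushita model structure on loop graphs a map $f$ is a fibration iff its restriction $f^\circ$ to maximal reflexive subgraphs (induced on looped vertices) is a Matsushita fibration in $\mathbf{Gr}$. *)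

From Stdlib Require Import FunctionalExtensionality ProofIrrelevance.
From HB Require Import structures.
From mathcomp Require Import all_boot.

Set Implicit Arguments.
Unset Strict Implicit.
Unset Printing Implicit Defensive.

Definition finite_pred {V : Type} (A : V -> Prop) : Prop :=
  exists (k : nat) (e : 'I_k -> V), forall x, A x -> exists i, e i = x.

Record Cpx := {
  cV : Type;
  csimp : (cV -> Prop) -> Prop;
  csimp_fin : forall A, csimp A -> finite_pred A /\ exists x, A x;
  csimp_single : forall x : cV, csimp (fun y => y = x);
  csimp_sub : forall A B : cV -> Prop, csimp A -> (forall x, B x -> A x) ->
                (exists x, B x) -> csimp B }.

Definition img {V W : Type} (f : V -> W) (A : V -> Prop) : W -> Prop :=
  fun y => exists x, A x /\ f x = y.

Definition cpx_map (K L : Cpx) (f : cV K -> cV L) : Prop :=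
  forall A, csimp A -> csimp (img f A).

Lemma cpx_map_comp (K L M : Cpx) (f : cV K -> cV L) (g : cV L -> cV M) :
  cpx_map f -> cpx_map g -> cpx_map (fun x => g (f x)).
Proof.
move=> hf hg A hA.
have hB := hg _ (hf _ hA).
apply: (csimp_sub hB).
  by move=> y [x [Ax <-]]; exists (f x); split => //; exists x.
have [_ [x Ax]] := csimp_fin hA.
by exists (g (f x)); exists x.
Qed.

Definition DeltaC_simp (n : nat) (A : 'I_n.+1 -> Prop) : Prop := exists x, A x.

Lemma DeltaC_fin n A : @DeltaC_simp n A -> finite_pred A /\ exists x, A x.
Proof. by move=> h; split => //; exists n.+1, id => x _; exists x. Qed.

Lemma DeltaC_single n (x : 'I_n.+1) : @DeltaC_simp n (fun y => y = x).
Proof. by exists x. Qed.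

Lemma DeltaC_sub n (A B : 'I_n.+1 -> Prop) : @DeltaC_simp n A ->
  (forall x, B x -> A x) -> (exists x, B x) -> @DeltaC_simp n B.
Proof. by []. Qed.

Definition DeltaC (n : nat) : Cpx :=
  {| cV := 'I_n.+1; csimp := @DeltaC_simp n;
     csimp_fin := @DeltaC_fin n; csimp_single := @DeltaC_single n;
     csimp_sub := @DeltaC_sub n |}.

Definition is_graph (K : Cpx) : Prop :=
  forall A, csimp A -> exists x y : cV K, forall z, A z -> z = x \/ z = y.

Record Gr := { gcpx : Cpx; gcpx_graph : is_graph gcpx }.

Definition Kn_simp (n : nat) (A : 'I_n -> Prop) : Prop :=
  (exists x, A x) /\ exists x y, forall z, A z -> z = x \/ z = y.

Lemma Kn_fin n A : @Kn_simp n A -> finite_pred A /\ exists x, A x.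
Proof. by move=> [h _]; split => //; exists n, id => x _; exists x. Qed.

Lemma Kn_single n (x : 'I_n) : @Kn_simp n (fun y => y = x).
Proof. by split; [exists x | exists x, x => z ->; left]. Qed.

Lemma Kn_sub n (A B : 'I_n -> Prop) : @Kn_simp n A ->
  (forall x, B x -> A x) -> (exists x, B x) -> @Kn_simp n B.
Proof.
move=> [_ [x [y h]]] hBA hB; split => //; exists x, y => z Bz; exact: h (hBA _ Bz).
Qed.

Definition Kn_cpx (n : nat) : Cpx :=
  {| cV := 'I_n; csimp := @Kn_simp n; csimp_fin := @Kn_fin n;
     csimp_single := @Kn_single n; csimp_sub := @Kn_sub n |}.

Lemma Kn_graph n : is_graph (Kn_cpx n).
Proof. by move=> A [_ h]. Qed.

Definition Kn (n : nat) : Gr := {| gcpx := Kn_cpx n; gcpx_graph := @Kn_graph n |}.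

Definition Cl_simp (G : Gr) (A : cV (gcpx G) -> Prop) : Prop :=
  [/\ finite_pred A, exists x, A x &
      forall x y, A x -> A y -> csimp (fun z => z = x \/ z = y)].

Lemma Cl_fin G A : @Cl_simp G A -> finite_pred A /\ exists x, A x.
Proof. by case. Qed.

Lemma Cl_single G (x : cV (gcpx G)) : @Cl_simp G (fun y => y = x).
Proof.
split; first by exists 1, (fun _ => x) => y ->; exists ord0.
  by exists x.
move=> y z -> ->; apply: (csimp_sub (csimp_single x)).
  by move=> w [|].
by exists x; left.
Qed.

Lemma Cl_sub G (A B : cV (gcpx G) -> Prop) : @Cl_simp G A ->
  (forall x, B x -> A x) -> (exists x, B x) -> @Cl_simp G B.
Proof.
move=> [[k [e he]] _ hp] hBA hB; split => //.
  by exists k, e => x Bx; apply: he; apply: hBA.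
by move=> x y Bx By; apply: hp; apply: hBA.
Qed.

Definition Cl (G : Gr) : Cpx :=
  {| cV := cV (gcpx G); csimp := @Cl_simp G; csimp_fin := @Cl_fin G;
     csimp_single := @Cl_single G; csimp_sub := @Cl_sub G |}.

Definition monob (m n : nat) (f : {ffun 'I_m.+1 -> 'I_n.+1}) : bool :=
  [forall i : 'I_m.+1, forall j : 'I_m.+1, (i <= j) ==> (f i <= f j)].

Definition Dmor (m n : nat) := {f : {ffun 'I_m.+1 -> 'I_n.+1} | monob f}.

Lemma monob_id n : monob [ffun i : 'I_n.+1 => i].
Proof. by apply/forallP => i; apply/forallP => j; rewrite !ffunE; apply/implyP. Qed.

Definition Did (n : nat) : Dmor n n := exist (@monob n n) _ (monob_id n).

Lemma monob_comp m n p (g : Dmor n p) (f : Dmor m n) :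
  monob [ffun i => proj1_sig g (proj1_sig f i)].
Proof.
case: g => g hg; case: f => f hf /=.
move/forallP: hg => hg; move/forallP: hf => hf.
apply/forallP => i; apply/forallP => j; rewrite !ffunE; apply/implyP => hij.
have /forallP/(_ j)/implyP/(_ hij) := hf i => hfij.
by have /forallP/(_ (f j))/implyP/(_ hfij) := hg (f i).
Qed.

Definition Dcomp m n p (g : Dmor n p) (f : Dmor m n) : Dmor m p :=
  exist (@monob m p) _ (monob_comp g f).

Record sSet := {
  sx : nat -> Type;
  sact : forall m n, Dmor m n -> sx n -> sx m;
  sact_id : forall n (x : sx n), sact (Did n) x = x;
  sact_comp : forall m n p (f : Dmor m n) (g : Dmor n p) (x : sx p),
      sact (Dcomp g f) x = sact f (sact g x) }.
Arguments sact {s m n}.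

Unset Implicit Arguments.
Record sMap (X Y : sSet) := {
  smap : forall n, sx X n -> sx Y n;
  snat : forall m n (f : Dmor m n) (x : sx X n),
      smap m (sact f x) = sact f (smap n x) }.
Arguments smap {X Y} s n.
Arguments snat {X Y} s {m n}.
Set Implicit Arguments.

Lemma sMap_eq (X Y : sSet) (f g : sMap X Y) :
  (forall n x, smap f n x = smap g n x) -> f = g.
Proof.
case: f => f hf; case: g => g hg /= h.
have e : f = g.
  by apply: functional_extensionality_dep => n; apply: functional_extensionality.
by subst g; f_equal; apply: proof_irrelevance.
Qed.

Definition scomp (X Y Z : sSet) (g : sMap Y Z) (f : sMap X Y) : sMap X Z.
Proof.
refine {| smap := fun n x => smap g n (smap f n x) |}.
by move=> m n h x; rewrite (snat f) (snat g).
Defined.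

Lemma sig_eq (A : Type) (P : A -> Prop) (x y : sig P) :
  proj1_sig x = proj1_sig y -> x = y.
Proof. by case: x => x px; case: y => y py /= e; subst y; f_equal; apply: proof_irrelevance. Qed.

Lemma Dcomp_id_r m n (g : Dmor m n) : Dcomp g (Did m) = g.
Proof. by apply: sig_eq; apply/ffunP => i; rewrite /= !ffunE. Qed.

Lemma Dcomp_assoc m n p q (h : Dmor p q) (g : Dmor n p) (f : Dmor m n) :
  Dcomp h (Dcomp g f) = Dcomp (Dcomp h g) f.
Proof. by apply: sig_eq; apply/ffunP => i; rewrite /= !ffunE. Qed.

Definition Delta (n : nat) : sSet.
Proof.
refine {| sx := fun m => Dmor m n;
          sact := fun m p (f : Dmor m p) (x : Dmor p n) => Dcomp x f |}.
- by move=> p x; apply: Dcomp_id_r.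
- by move=> m p q f g x; apply: Dcomp_assoc.
Defined.

Definition hornb (n : nat) (k : 'I_n.+1) m (f : Dmor m n) : bool :=
  [exists j : 'I_n.+1, (j != k) && [forall i : 'I_m.+1, proj1_sig f i != j]].

Lemma hornb_act n k m p (f : Dmor m p) (x : Dmor p n) :
  hornb k x -> hornb k (Dcomp x f).
Proof.
move=> /existsP [j /andP [jk /forallP hj]]; apply/existsP; exists j.
by rewrite jk /=; apply/forallP => i; rewrite ffunE.
Qed.

Definition Horn (n : nat) (k : 'I_n.+1) : sSet.
Proof.
refine {| sx := fun m => {f : Dmor m n | hornb k f};
          sact := fun m p (f : Dmor m p) x =>
                    exist _ (Dcomp (proj1_sig x) f) (hornb_act f (proj2_sig x)) |}.
- by move=> p x; apply: sig_eq; apply: Dcomp_id_r.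
- by move=> m p q f g x; apply: sig_eq; apply: Dcomp_assoc.
Defined.

Definition horn_incl (n : nat) (k : 'I_n.+1) : sMap (Horn k) (Delta n).
Proof.
refine {| smap := fun m (x : sx (Horn k) m) => proj1_sig x : sx (Delta n) m |}.
by [].
Defined.

Definition Kan (X : sSet) : Prop :=
  forall (n : nat) (k : 'I_n.+1), 0 < n ->
  forall h : sMap (Horn k) X,
  exists g : sMap (Delta n) X, scomp g (horn_incl k) = h.

Lemma Dmor_cpx m n (f : Dmor m n) :
  cpx_map (K := DeltaC m) (L := DeltaC n) (fun i => proj1_sig f i).
Proof. by move=> A [x Ax]; exists (proj1_sig f x); exists x. Qed.

Definition Sing (K : Cpx) : sSet.
Proof.
refine {| sx := fun n => {f : 'I_n.+1 -> cV K | cpx_map (K := DeltaC n) f};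
          sact := fun m n (th : Dmor m n) x =>
            exist _ (fun i => proj1_sig x (proj1_sig th i))
              (cpx_map_comp (Dmor_cpx th) (proj2_sig x)) |}.
- move=> n x; apply: sig_eq => /=.
  by apply: functional_extensionality => i; rewrite ffunE.
- move=> m n p f g x; apply: sig_eq => /=.
  by apply: functional_extensionality => i; rewrite ffunE.
Defined.

(* sd Delta^n = nerve of the poset of nonempty subsets of [n]:
   m-simplices are chains c_0 <= ... <= c_m of nonempty subsets *)
Definition chainb (m n : nat) (c : {ffun 'I_m.+1 -> {set 'I_n.+1}}) : bool :=
  [forall i : 'I_m.+1, c i != set0] &&
  [forall i : 'I_m.+1, forall j : 'I_m.+1, (i <= j) ==> (c i \subset c j)].

Definition sdx (n m : nat) := {c : {ffun 'I_m.+1 -> {set 'I_n.+1}} | chainb c}.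

Lemma chainb_act n m p (f : Dmor m p) (c : sdx n p) :
  chainb [ffun i => proj1_sig c (proj1_sig f i)].
Proof.
case: c => c hcc; case: f => f hf /=.
move/andP: hcc => [/forallP hne /forallP hc]; move/forallP: hf => hf.
apply/andP; split; apply/forallP => i; rewrite ?ffunE //.
apply/forallP => j; rewrite !ffunE; apply/implyP => hij.
have /forallP/(_ j)/implyP/(_ hij) := hf i => hfij.
by have /forallP/(_ (f j))/implyP/(_ hfij) := hc (f i).
Qed.

Definition sd (n : nat) : sSet.
Proof.
refine {| sx := sdx n;
          sact := fun m p (f : Dmor m p) c => exist (@chainb m n) _ (chainb_act f c) |}.
- by move=> p c; apply: sig_eq; apply/ffunP => i; rewrite /= !ffunE.
- by move=> m p q f g c; apply: sig_eq; apply/ffunP => i; rewrite /= !ffunE.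
Defined.

Lemma chainb_img n n' m (a : Dmor n n') (c : sdx n m) :
  chainb [ffun i => [set proj1_sig a x | x in proj1_sig c i]].
Proof.
case: c => c hcc /=.
move/andP: hcc => [/forallP hne /forallP hc].
apply/andP; split; apply/forallP => i; rewrite ?ffunE.
  by rewrite imset_eq0; apply: hne.
apply/forallP => j; rewrite !ffunE; apply/implyP => hij.
by apply: imsetS; have /forallP/(_ j)/implyP := hc i; apply.
Qed.

Definition sdmap (n n' : nat) (a : Dmor n n') : sMap (sd n) (sd n').
Proof.
refine {| smap := fun m (c : sx (sd n) m) =>
            (exist (@chainb m n') _ (chainb_img a c) : sx (sd n') m) |}.
by move=> m p f c; apply: sig_eq; apply/ffunP => i; rewrite /= !ffunE.
Defined.

Lemma sdmap_id n : sdmap (Did n) = {| smap := fun m x => x; snat := fun _ _ _ _ => erefl |}.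
Proof.
apply: sMap_eq => m c; apply: sig_eq; apply/ffunP => i /=; rewrite ffunE.
by apply/setP => x; apply/imsetP/idP => [[y hy ->]|hx]; [rewrite ffunE|exists x; rewrite ?ffunE].
Qed.

Definition Ex (X : sSet) : sSet.
Proof.
refine {| sx := fun n => sMap (sd n) X;
          sact := fun m n (th : Dmor m n) (phi : sMap (sd n) X) =>
                    scomp phi (sdmap th) |}.
- move=> n phi; apply: sMap_eq => m c /=.
  congr (smap phi m _); apply: sig_eq; apply/ffunP => i /=; rewrite ffunE.
  apply/setP => x; apply/imsetP/idP => [[y hy ->]|hx]; first by rewrite ffunE.
  by exists x; rewrite ?ffunE.
- move=> m n p f g phi; apply: sMap_eq => q c /=.
  congr (smap phi q _); apply: sig_eq; apply/ffunP => i /=; rewrite !ffunE.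
  by rewrite -imset_comp; apply: eq_imset => x /=; rewrite ffunE.
Defined.

From Stdlib Require Import FunctionalExtensionality ProofIrrelevance.
From HB Require Import structures.
From mathcomp Require Import all_boot.

Set Implicit Arguments.
Unset Strict Implicit.
Unset Printing Implicit Defensive.

(* Cl(K^n) is the full simplex on n vertices, so a simplex of Sing Cl(K^n) is
   just a list of vertices, and an N-simplex of Ex^2 Sing Cl(K^n) amounts to an
   arbitrary label on every chain of faces of Delta^N.  A horn
   Lambda^N_k -> Ex^2 Sing Cl(K^n) labels, through each of its simplices, the
   chains lying in the horn; by naturality along retractions of simplices onto
   faces, the label of a chain does not depend on the horn simplex through which
   it is seen.  Labelling the remaining chains arbitrarily gives the filler. *)

Section Retraction.
Variables (m : nat) (T : {set 'I_m.+1}).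

(* [x] goes to the largest element of [T] below it, or to [min T] if there is none. *)
Definition retraction_nat (x : 'I_m.+1) : nat :=
  \max_(y in T | (y <= x) || [forall z in T, y <= z]) y.

Lemma retraction_nat_le x : retraction_nat x <= m.
Proof. by apply/bigmax_leqP => y _; rewrite -ltnS. Qed.

Definition retraction_ffun : {ffun 'I_m.+1 -> 'I_m.+1} :=
  [ffun x => inord (retraction_nat x)].

Lemma retraction_mono : monob retraction_ffun.
Proof.
apply/forallP => x; apply/forallP => x'; apply/implyP => le_xx'.
rewrite !ffunE !inordK ?ltnS ?retraction_nat_le //.
apply/bigmax_leqP => y /andP [yT y_ok]; apply: leq_bigmax_cond.
by rewrite yT; case/orP: y_ok => [le_yx|->]; rewrite ?(leq_trans le_yx le_xx') ?orbT.
Qed.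

Definition retraction : Dmor m m := exist _ retraction_ffun retraction_mono.

Lemma retraction_mem x : T != set0 -> proj1_sig retraction x \in T.
Proof.
case/set0Pn => y0 y0T; rewrite /= ffunE /retraction_nat.
have [y yT min_y] := arg_minnP (fun y : 'I_m.+1 => nat_of_ord y) y0T.
have [|z /andP [zT _] ->] := eq_bigmax_cond (fun y : 'I_m.+1 => nat_of_ord y)
   (A := [pred y | (y \in T) && ((y <= x) || [forall z in T, y <= z])]).
  apply/card_gt0P; exists y; rewrite inE /=; apply/andP; split; first exact: yT.
  by apply/orP; right; apply/forall_inP.
by rewrite inord_val.
Qed.

Lemma retraction_id x : x \in T -> proj1_sig retraction x = x.
Proof.
move=> xT; apply: val_inj; rewrite /= ffunE inordK ?ltnS ?retraction_nat_le //.
apply/eqP; rewrite eqn_leq; apply/andP; split; last first.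
  by apply: leq_bigmax_cond; rewrite xT leqnn.
by apply/bigmax_leqP => y /andP [yT /orP [//|/forall_inP]]; apply.
Qed.

Lemma sdmap_retraction_id q (c : sdx m q) :
  (forall i, proj1_sig c i \subset T) -> smap (sdmap retraction) q c = c.
Proof.
move=> cT; apply: sig_eq; apply/ffunP => i; rewrite /= ffunE.
rewrite (eq_in_imset (g := id)) ?imset_id // => x xi.
by apply: retraction_id; apply: (subsetP (cT i)).
Qed.

End Retraction.

Lemma sdmap_comp m n p (g : Dmor n p) (f : Dmor m n) q (c : sdx m q) :
  smap (sdmap (Dcomp g f)) q c = smap (sdmap g) q (smap (sdmap f) q c).
Proof.
apply: sig_eq; apply/ffunP => i; rewrite /= !ffunE -imset_comp.
by apply: eq_imset => x; rewrite /= ffunE.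
Qed.

Lemma sdx_neq0 m q (c : sdx m q) i : proj1_sig c i != set0.
Proof. by case/andP: (proj2_sig c) => /forallP. Qed.

Lemma sdx_subset m q (c : sdx m q) (i j : 'I_q.+1) :
  i <= j -> proj1_sig c i \subset proj1_sig c j.
Proof. by case/andP: (proj2_sig c) => _ /forallP /(_ i) /forallP /(_ j) /implyP. Qed.

Definition chain_of N p (c : sdx N p) (B : {set 'I_p.+1}) : {set {set 'I_N.+1}} :=
  [set proj1_sig c j | j in B].

(* The canonical N-chain through a chain [C] of subsets of [N]: its [j]-th
   entry is the smallest member of [C] with more than [j] elements (or the
   full set if there is none). *)
Definition chain_level N (C : {set {set 'I_N.+1}}) (j : nat) : {set 'I_N.+1} :=
  \bigcap_(X in C | j < #|X|) X.

Lemma predn_card_lt N (X : {set 'I_N.+1}) : #|X|.-1 < N.+1.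
Proof. by have := max_card (mem X); rewrite card_ord; case: #|X|. Qed.

Definition chain_sizes N (C : {set {set 'I_N.+1}}) : {set 'I_N.+1} :=
  [set inord #|X|.-1 | X : {set 'I_N.+1} in C].

Lemma chain_level_mono N (C : {set {set 'I_N.+1}}) i j :
  i <= j -> chain_level C i \subset chain_level C j.
Proof.
move=> le_ij; apply/bigcapsP => X /andP [XC ltjX]; apply: bigcap_inf.
by rewrite XC (leq_ltn_trans le_ij ltjX).
Qed.

Section ChainOf.
Variables (N p : nat) (c : sdx N p) (B : {set 'I_p.+1}).

Lemma chain_of_le_subset X Y : X \in chain_of c B -> Y \in chain_of c B ->
  #|X| <= #|Y| -> X \subset Y.
Proof.
move=> /imsetP [i _ ->] /imsetP [j _ ->] le_card.
have [le_ij|/ltnW le_ji] := leqP i j; first exact: sdx_subset.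
have sub_ji := sdx_subset c le_ji.
suff -> : proj1_sig c i = proj1_sig c j by [].
by apply/esym/eqP; rewrite eqEcard sub_ji le_card.
Qed.

Lemma chain_level_card X : X \in chain_of c B -> chain_level (chain_of c B) #|X|.-1 = X.
Proof.
move=> XC; have X_gt0 : 0 < #|X| by case/imsetP: XC => i _ ->; rewrite card_gt0 sdx_neq0.
apply/eqP; rewrite eqEsubset; apply/andP; split.
  by rewrite /chain_level; apply: (bigcap_inf X); rewrite XC (prednK X_gt0) /=.
apply/bigcapsP => Y /andP [YC ltXY]; apply: chain_of_le_subset => //.
by rewrite -(prednK X_gt0).
Qed.

Lemma chain_level_neq0 j : B != set0 -> chain_level (chain_of c B) j != set0.
Proof.
case/set0Pn => i iB.
have [_ /imsetP [i0 i0B ->] min_i0] :=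
  arg_minnP (fun X : {set 'I_N.+1} => #|X|) (imset_f (fun j => proj1_sig c j) iB).
have : proj1_sig c i0 \subset chain_level (chain_of c B) j.
  apply: subset_trans (chain_level_mono _ (leq0n j)).
  apply/bigcapsP => Y /andP [YC _].
  by apply: chain_of_le_subset; rewrite ?imset_f ?(min_i0 Y YC).
by apply: contraTneq => ->; rewrite subset0 sdx_neq0.
Qed.

Lemma chainb_chain_level : B != set0 ->
  chainb [ffun j : 'I_N.+1 => chain_level (chain_of c B) j].
Proof.
move=> B_neq0; apply/andP; split; apply/forallP => i; rewrite ?ffunE.
  exact: chain_level_neq0.
by apply/forallP => j; rewrite !ffunE; apply/implyP; apply: chain_level_mono.
Qed.

Lemma chainb_chain_sizes : B != set0 -> chainb [ffun _ : 'I_1 => chain_sizes (chain_of c B)].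
Proof.
move=> B_neq0; apply/andP; split; apply/forallP => i; rewrite ?ffunE.
  by rewrite !imset_eq0.
by apply/forallP => j; rewrite !ffunE subxx implybT.
Qed.

End ChainOf.

Lemma cover_chain_of_sdmap m N (f : Dmor m N) p (c : sdx m p) (B : {set 'I_p.+1}) :
  cover (chain_of (smap (sdmap f) p c) B) =
  [set proj1_sig f x | x in \bigcup_(j in B) proj1_sig c j].
Proof.
rewrite cover_imset; apply/setP => y; apply/bigcupP/imsetP.
  case=> j jB; rewrite /= ffunE => /imsetP [x xj ->].
  by exists x => //; apply/bigcupP; exists j.
by case=> x /bigcupP [j jB xj] ->; exists j; rewrite //= ffunE imset_f.
Qed.

Lemma hornb_retraction N (k : 'I_N.+1) m (f : Dmor m N) (A : {set 'I_m.+1}) :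
  hornb k f -> A != set0 -> hornb k (retraction [set proj1_sig f x | x in A]).
Proof.
case/existsP => j0 /andP [j0k /forallP f_j0] A_neq0.
apply/existsP; exists j0; rewrite j0k; apply/forallP => i.
have : [set proj1_sig f x | x in A] != set0 by rewrite imset_eq0.
by move/(retraction_mem i)/imsetP => [x _ ->].
Qed.

Lemma sdx_card_mono N p (c : sdx N p) :
  monob [ffun j => (inord #|proj1_sig c j|.-1 : 'I_N.+1)].
Proof.
apply/forallP => i; apply/forallP => j; apply/implyP => le_ij.
rewrite !ffunE !inordK ?predn_card_lt // -!subn1 leq_sub2r //.
exact/subset_leq_card/sdx_subset.
Qed.

Section Ex2Vertex.
Variable X : sSet.

Definition ex2_vertex m (phi : sx (Ex (Ex X)) m) p (c : sdx m p) (d : sdx p 0) : sx X 0 :=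
  smap (smap phi p c) 0 d.

Lemma ex2_vertex_act m m' (f : Dmor m' m) (phi : sx (Ex (Ex X)) m) p (c : sdx m' p)
    (d : sdx p 0) :
  ex2_vertex (sact f phi) c d = ex2_vertex phi (smap (sdmap f) p c) d.
Proof. by []. Qed.

Lemma ex2_vertex_sd m (phi : sx (Ex (Ex X)) m) p p' (s : Dmor p' p) (c : sdx m p)
    (d : sdx p' 0) :
  ex2_vertex phi (sact (s := sd m) s c) d = ex2_vertex phi c (smap (sdmap s) 0 d).
Proof. by rewrite /ex2_vertex (snat phi s c). Qed.

Lemma ex2_vertex_retraction m (phi : sx (Ex (Ex X)) m) p (c : sdx m p) (d : sdx p 0) :
  ex2_vertex phi (sact (s := sd m) (retraction (proj1_sig d ord0)) c) d =
  ex2_vertex phi c d.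
Proof. by rewrite ex2_vertex_sd sdmap_retraction_id // => i; rewrite (ord1 i). Qed.

Lemma ex2_vertex_chain_level N (phi : sx (Ex (Ex X)) N) p (c : sdx N p) (d : sdx p 0)
    (c0 : sdx N N) (d0 : sdx N 0) :
  (forall j, proj1_sig c j \in chain_of c (proj1_sig d ord0)) ->
  (forall j, proj1_sig c0 j = chain_level (chain_of c (proj1_sig d ord0)) j) ->
  proj1_sig d0 ord0 = chain_sizes (chain_of c (proj1_sig d ord0)) ->
  ex2_vertex phi c d = ex2_vertex phi c0 d0.
Proof.
move=> c_mem c0E d0E.
pose s : Dmor p N := exist (@monob p N) _ (sdx_card_mono c).
have -> : c = sact (s := sd N) s c0.
  apply: sig_eq; apply/ffunP => j; rewrite /= !ffunE c0E inordK ?predn_card_lt //.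
  by rewrite chain_level_card.
rewrite ex2_vertex_sd; congr ex2_vertex; apply: sig_eq; apply/ffunP => i.
rewrite (ord1 i) /= !ffunE d0E /chain_sizes /chain_of -imset_comp.
by apply: eq_imset => j; rewrite /= ffunE.
Qed.

End Ex2Vertex.

Section HornChains.
Variables (X : sSet) (N : nat) (k : 'I_N.+1) (h : sMap (Horn k) (Ex (Ex X))).

Lemma ex2_vertex_horn_factor m (t : sx (Horn k) m) (tau : sx (Horn k) N) p (c : sdx m p)
    (d : sdx p 0) (A : {set 'I_m.+1}) :
  A != set0 -> (forall j, proj1_sig c j \subset A) ->
  {in [set proj1_sig (proj1_sig t) x | x in A], forall y, proj1_sig (proj1_sig tau) y = y} ->
  ex2_vertex (smap h m t) c d = ex2_vertex (smap h N tau) (smap (sdmap (proj1_sig t)) p c) d.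
Proof.
move=> A_neq0 cA tau_id; set th := proj1_sig t; pose rho := retraction A.
have th_rho x : proj1_sig th (proj1_sig rho x) \in [set proj1_sig th x | x in A].
  by rewrite imset_f // retraction_mem.
have t_rho : sact (s := Horn k) rho t = sact (s := Horn k) (Dcomp th rho) tau.
  apply: sig_eq; apply: sig_eq; apply/ffunP => x.
  by have := th_rho x; rewrite /= !ffunE => /tau_id ->.
rewrite -{1}(sdmap_retraction_id cA) -ex2_vertex_act -(snat h) t_rho (snat h).
by rewrite ex2_vertex_act sdmap_comp sdmap_retraction_id.
Qed.

(* The label of [C] read off at a canonical presentation of [C]. *)
Definition horn_chain_value (C : {set {set 'I_N.+1}}) : option (sx X 0) :=
  if (insub (retraction (cover C)) : option (sx (Horn k) N)) is Some tau then
  if (insub [ffun j : 'I_N.+1 => chain_level C j] : option (sdx N N)) is Some c then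
  if (insub [ffun _ : 'I_1 => chain_sizes C] : option (sdx N 0)) is Some d then
    Some (ex2_vertex (smap h N tau) c d)
  else None else None else None.

Lemma horn_chain_value_chain_of m (t : sx (Horn k) m) p (c : sdx m p) (d : sdx p 0) :
  horn_chain_value (chain_of (smap (sdmap (proj1_sig t)) p c) (proj1_sig d ord0)) =
  Some (ex2_vertex (smap h m t) c d).
Proof.
set th := proj1_sig t; set B := proj1_sig d ord0; set C := chain_of _ B.
pose sigma := retraction B; pose c1 := sact (s := sd m) sigma c.
pose A := \bigcup_(j in B) proj1_sig c j.
have B_neq0 : B != set0 := sdx_neq0 d ord0.
have sigma_B j : proj1_sig sigma j \in B by apply: retraction_mem.
have c1E j : proj1_sig c1 j = proj1_sig c (proj1_sig sigma j) by rewrite /= ffunE.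
have c1A j : proj1_sig c1 j \subset A by rewrite c1E; apply: bigcup_sup.
have A_neq0 : A != set0.
  by apply: contraNneq (sdx_neq0 c1 ord0) => A0; rewrite -subset0 -A0.
have th_c1E j : proj1_sig (smap (sdmap th) p c1) j =
    [set proj1_sig th x | x in proj1_sig c (proj1_sig sigma j)].
  by rewrite -c1E [LHS]/= ffunE.
have c1C : chain_of (smap (sdmap th) p c1) B = C.
  by apply: eq_in_imset => j jB; rewrite th_c1E retraction_id //= ffunE.
have cover_C : cover C = [set proj1_sig th x | x in A] := cover_chain_of_sdmap th c B.
have tau_horn : hornb k (retraction (cover C)).
  by rewrite cover_C; apply: hornb_retraction (proj2_sig t) A_neq0.
have level_chain := chainb_chain_level (smap (sdmap th) p c) B_neq0.
have sizes_chain := chainb_chain_sizes (smap (sdmap th) p c) B_neq0.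
rewrite /horn_chain_value (insubT _ tau_horn) (insubT _ level_chain) (insubT _ sizes_chain).
(* [(t, c, d)] reaches the canonical presentation by retracting [c] onto its
   entries indexed by [B], then [t] onto the face [A] they span, and finally
   reindexing the resulting chain by cardinality. *)
congr Some; symmetry.
rewrite -ex2_vertex_retraction (ex2_vertex_horn_factor (tau := Sub _ tau_horn) d A_neq0 c1A).
- apply: ex2_vertex_chain_level => [j||]; rewrite -/th -/B.
  + by apply/imsetP; exists (proj1_sig sigma j); rewrite // !th_c1E (retraction_id (sigma_B j)).
  + by move=> j; rewrite c1C /= ffunE.
  + by rewrite c1C /= ffunE.
- by move=> y; rewrite -cover_C; apply: retraction_id.
Qed.

End HornChains.

Definition yoneda (X : sSet) n (x : sx X n) : sMap (Delta n) X :=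
  {| smap := fun m (th : sx (Delta n) m) => sact th x;
     snat := fun m m' f th => sact_comp f th x |}.

Lemma vertex_mono q (i : 'I_q.+1) : monob [ffun _ : 'I_1 => i].
Proof. by apply/forallP => a; apply/forallP => b; rewrite !ffunE leqnn implybT. Qed.

Definition vertex q (i : 'I_q.+1) : Dmor 0 q := exist (@monob 0 q) _ (vertex_mono i).

Lemma ex2_sing_ext (K : Cpx) m (phi psi : sx (Ex (Ex (Sing K))) m) :
  (forall p (c : sdx m p) (d : sdx p 0),
     proj1_sig (ex2_vertex phi c d) ord0 = proj1_sig (ex2_vertex psi c d) ord0) ->
  phi = psi.
Proof.
move=> phi_psi; apply: sMap_eq => p c; apply: sMap_eq => q d.
apply: sig_eq; apply: functional_extensionality => i.
have vertexE (Y : sMap (sd p) (Sing K)) :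
    proj1_sig (smap Y q d) i = proj1_sig (smap Y 0 (sact (s := sd p) (vertex i) d)) ord0.
  by rewrite (snat Y) /= ffunE.
by rewrite !vertexE phi_psi.
Qed.

Definition full_cpx (K : Cpx) : Prop :=
  forall A : cV K -> Prop, finite_pred A -> (exists x, A x) -> csimp A.

Lemma full_cpx_map (K : Cpx) : full_cpx K ->
  forall q (f : 'I_q.+1 -> cV K), cpx_map (K := DeltaC q) f.
Proof.
move=> K_full q f A [x Ax]; apply: K_full; last by exists (f x), x.
by exists q.+1, f => _ [y [_ <-]]; exists y.
Qed.

Lemma Cl_Kn_full n : full_cpx (Cl (Kn n)).
Proof.
move=> A A_fin A_neq0; split=> // x y _ _; split; first by exists x; left.
by exists x, y.
Qed.

Section FullComplex.
Variables (K : Cpx) (K_full : full_cpx K).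

Definition sing_simplex q (f : 'I_q.+1 -> cV K) : sx (Sing K) q :=
  exist _ f (full_cpx_map K_full f).

Definition sd_to_sing p (G : {set 'I_p.+1} -> cV K) : sMap (sd p) (Sing K).
Proof.
refine {| smap := fun q (d : sx (sd p) q) => sing_simplex (fun i => G (proj1_sig d i)) |}.
by move=> q q' f d; apply: sig_eq; apply: functional_extensionality => i; rewrite /= ffunE.
Defined.

Definition ex2_sing_simplex N (F : {set {set 'I_N.+1}} -> cV K) :
  sx (Ex (Ex (Sing K))) N.
Proof.
refine {| smap := fun p (c : sx (sd N) p) =>
            (sd_to_sing (fun S => F (chain_of c S)) : sx (Ex (Sing K)) p) |}.
move=> p p' f c; apply: sMap_eq => q d; apply: sig_eq.
apply: functional_extensionality => i; rewrite /= /chain_of ffunE -imset_comp.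
by congr F; apply: eq_imset => j; rewrite /= ffunE.
Defined.

Lemma ex2_sing_Kan : inhabited (cV K) -> Kan (Ex (Ex (Sing K))).
Proof.
case=> x0 N k _ h.
pose F C := if horn_chain_value h C is Some v then proj1_sig v ord0 else x0.
exists (yoneda (ex2_sing_simplex F)).
apply: sMap_eq => m t; apply: ex2_sing_ext => p c d.
by rewrite /= /F horn_chain_value_chain_of.
Qed.

End FullComplex.

Theorem lemma6p5 (n : nat) : 1 <= n -> Kan (Ex (Ex (Sing (Cl (Kn n))))).
Proof.
case: n => [//|n] _.
by apply: ex2_sing_Kan; [apply: Cl_Kn_full | constructor; apply: ord0].
Qed.
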